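(* Let $\mathcal{H}=(\mathcal{V},\mathcal{E},\mu,\{w_e\})$ be a submodular hypergraph with $\mathcal{V}=[N]$, and let $\mathcal{G}$ be a directed graph with vertex set $\mathcal{V}_\mathcal{G}=\mathcal{V}\cup\bar{\mathcal{V}}$, where $\bar{\mathcal{V}}$ is a set of $M$ auxiliary vertices disjoint from $\mathcal{V}$, and nonnegative weighted adjacency matrix $\mathbf{A}$. Then the following two statements are equivalent: (i) $\mathrm{cut}_{\mathcal{H}}(\mathcal{S})=\min_{\mathcal{T}\subseteq\bar{\mathcal{V}}}\mathrm{cut}_{\mathcal{G}}(\mathcal{S}\cup\mathcal{T})$ for all $\mathcal{S}\subseteq\mathcal{V}$; (ii) $Q_1(\mathbf{x})=\min_{\bar{\mathbf{x}}\in\mathbb{R}^M}Q_1^{(g)}(\mathbf{y})$ for all $\mathbf{x}\in\mathbb{R}^N$, where $\mathbf{y}\in\mathbb{R}^{N+M}$ has $\mathbf{y}_{\mathcal{V}}=\mathbf{x}$ and $\mathbf{y}_{\bar{\mathcal{V}}}=\bar{\mathbf{x}}$.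
   Context: Lovász extension: for a set function $F:2^{[n]}\to\mathbb{R}$ with $F(\emptyset)=0$, and $\mathbf{x}\in\mathbb{R}^n$ with entries sorted as $x_{i_1}\ge\cdots\ge x_{i_n}$, $f(\mathbf{x})=\sum_{j=1}^{n-1}F(\{i_1,\dots,i_j\})(x_{i_j}-x_{i_{j+1}})+F([n])x_{i_n}$. A submodular hypergraph $\mathcal{H}=(\mathcal{V},\mathcal{E},\mu,\{w_e\})$ has vertex set $\mathcal{V}=[N]$, a set $\mathcal{E}$ of hyperedges $e\subseteq\mathcal{V}$, positive vertex weights $\mu$, and for each $e$ a splitting function $w_e:2^e\to\mathbb{R}_{\ge0}$ that is submodular, symmetric ($w_e(\mathcal{S})=w_e(e\setminus\mathcal{S})$) and satisfies $w_e(\emptyset)=0$; it is extended to $2^{\mathcal{V}}$ by $w_e(\mathcal{S})=w_e(\mathcal{S}\cap e)$. The hypergraph cut function is $\mathrm{cut}_{\mathcal{H}}(\mathcal{S})=\sum_{e\in\mathcal{E}}w_e(\mathcal{S})$, and $Q_1:\mathbb{R}^N\to\mathbb{R}$ is its Lovász extension (equivalently $Q_1(\mathbf{x})=\sum_{e}\vartheta_e f_e(\mathbf{x})$ with $\vartheta_e=\max_{\mathcal{S}\subseteq e}w_e(\mathcal{S})$ and $f_e$ the Lovász extension of $\vartheta_e^{-1}w_e$). For a directed graph with vertex set $\mathcal{V}_\mathcal{G}$ and nonnegative adjacency matrix $\mathbf{A}$ ($A_{uv}$ = weight of edge $u\to v$), $\mathrm{cut}_\mathcal{G}(\mathcal{S})=\sum_{u\in\mathcal{S},v\in\mathcal{V}_\mathcal{G}\setminus\mathcal{S}}A_{uv}$,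 and its Lovász extension is $Q_1^{(g)}(\mathbf{y})=\sum_{u,v\in\mathcal{V}_\mathcal{G}}A_{uv}\max\{y_u-y_v,0\}$. *)

From HB Require Import structures.
From mathcomp Require Import all_boot all_order all_algebra.
From mathcomp Require Import reals.
Set Implicit Arguments. Unset Strict Implicit. Unset Printing Implicit Defensive.
Import Order.TTheory GRing.Theory Num.Theory.
Local Open Scope ring_scope.

Section Defs.
Variable R : realType.

(* Lovász extension of F : 2^[n] -> R (F set0 = 0 is a hypothesis of use).
   s = indices sorted so that x_{s_0} >= x_{s_1} >= ... ; xs`_n = 0 so that
   the last term is F([n]) * x_{i_n}. *)
Definition lovasz (n : nat) (F : {set 'I_n} -> R) (x : 'I_n -> R) : R :=
  let s := sort (fun i j => x j <= x i) (enum 'I_n) in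
  let xs := map x s in
  \sum_(j < n) F [set i in take j.+1 s] * (xs`_j - xs`_j.+1).

Definition is_min (T : Type) (f : T -> R) (m : R) : Prop :=
  (exists t, f t = m) /\ (forall t, m <= f t).

Definition splitting_fun (N : nat) (e : {set 'I_N}) (w : {set 'I_N} -> R) : Prop :=
  [/\ w set0 = 0,
      (forall S : {set 'I_N}, S \subset e -> 0 <= w S),
      (forall S : {set 'I_N}, S \subset e -> w S = w (e :\: S)) &
      (forall S T : {set 'I_N}, S \subset e -> T \subset e ->
         w (S :|: T) + w (S :&: T) <= w S + w T)].

Definition cutH (N : nat) (Ed : {set {set 'I_N}})
  (w : {set 'I_N} -> {set 'I_N} -> R) (S : {set 'I_N}) : R :=
  \sum_(e in Ed) w e (S :&: e).

Definition Q1 (N : nat) (Ed : {set {set 'I_N}})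
  (w : {set 'I_N} -> {set 'I_N} -> R) (x : 'I_N -> R) : R :=
  lovasz (cutH Ed w) x.

(* directed graph on V ⊔ Vbar = 'I_N + 'I_M with adjacency A u v (u -> v) *)
Definition cutG (T : finType) (A : T -> T -> R) (S : {set T}) : R :=
  \sum_(u in S) \sum_(v in ~: S) A u v.

Definition Q1g (T : finType) (A : T -> T -> R) (y : T -> R) : R :=
  \sum_u \sum_v A u v * Num.max (y u - y v) 0.

Definition join_set (N M : nat) (S : {set 'I_N}) (T : {set 'I_M})
  : {set ('I_N + 'I_M)%type} :=
  [set inl i | i in S] :|: [set inr j | j in T].

Definition join_vec (N M : nat) (x : 'I_N -> R) (xb : 'I_M -> R)
  : ('I_N + 'I_M)%type -> R :=
  fun u => match u with inl i => x i | inr j => xb j end.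

End Defs.

(* Both Lovász extensions are layer sums of their cut functions: for a strictly
   decreasing grid v_0 > ... > v_k containing every coordinate of x,
   Q1 x = \sum_l cutH {x >= v_l} (v_l - v_(l+1)), and similarly for Q1g with cutG.
   So (i) bounds Q1 x by Q1g (x, xb) level by level.  Equality needs auxiliary
   coordinates whose level sets are minimizers for the level sets of x: since
   cutG is submodular, the minimizers T of cutG (S u T) are closed under union,
   the largest one is monotone in S, and a monotone family of sets is the family
   of level sets of xb_j = max {x_i | j in Tmax {x >= x_i}}.
   Conversely, (ii) at the indicator vector of S gives (i): indicator vectors of
   sets T give the lower bound, and the level sets in (0, 1] of a minimizing xb
   show that the minimum over T is attained. *)

From HB Require Import structures.
From mathcomp Require Import all_boot all_order all_algebra.
From mathcomp Require Import reals.
From mathcomp Require Import ring lra.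
Import Order.TTheory GRing.Theory Num.Theory.
Set Implicit Arguments. Unset Strict Implicit. Unset Printing Implicit Defensive.
Local Open Scope ring_scope.

Section LayerSum.
Variable R : realDomainType.

Fixpoint layer_sum (f : R -> R) (v : seq R) : R :=
  if v is a :: ((b :: _) as v') then f a * (a - b) + layer_sum f v' else 0.

Definition ind (b : bool) : R := (b : nat)%:R.

Lemma layer_sum_cons2 f a b r :
  layer_sum f [:: a, b & r] = f a * (a - b) + layer_sum f (b :: r).
Proof. by []. Qed.

Lemma sorted_gt_behead (a : R) v : sorted >%R (a :: v) -> sorted >%R v.
Proof. by case: v => //= b r /andP[]. Qed.

Lemma sorted_gt_head (a : R) v : sorted >%R (a :: v) -> forall t, t \in v -> t < a.
Proof.
move=> sv t tv; have := order_path_min (fun y x z h1 h2 => lt_trans h2 h1) sv.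
by move/allP/(_ t tv).
Qed.

Lemma eq_layer_sum f g v : {in v, f =1 g} -> layer_sum f v = layer_sum g v.
Proof.
elim: v => [|a [|b r] IH] // fg.
rewrite !layer_sum_cons2 fg ?mem_head // IH // => t tv.
by apply: fg; rewrite inE tv orbT.
Qed.

Lemma ler_layer_sum f g v :
  sorted >%R v -> (forall t, f t <= g t) -> layer_sum f v <= layer_sum g v.
Proof.
elim: v => [|a [|b r] IH] // sv fg.
rewrite !layer_sum_cons2 lerD ?IH ?(sorted_gt_behead sv) //.
by rewrite ler_wpM2r ?fg // subr_ge0 ltW // (sorted_gt_head sv) ?mem_head.
Qed.

Lemma layer_sum_sum (I : Type) (r : seq I) (P : pred I) (F : I -> R -> R) v :
  layer_sum (fun t => \sum_(i <- r | P i) F i t) v =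
  \sum_(i <- r | P i) layer_sum (F i) v.
Proof.
elim: v => [|a [|b v] IH]; try by rewrite big1.
by rewrite !layer_sum_cons2 IH mulr_suml -big_split.
Qed.

Lemma layer_sumZ c f v : layer_sum (fun t => c * f t) v = c * layer_sum f v.
Proof. by elim: v => [|a [|b v] IH]; rewrite ?mulr0 // !layer_sum_cons2 IH; ring. Qed.

Lemma layer_sumB f g v :
  layer_sum (fun t => f t - g t) v = layer_sum f v - layer_sum g v.
Proof. by elim: v => [|a [|b v] IH]; rewrite ?subr0 // !layer_sum_cons2 IH; ring. Qed.

Lemma layer_sum0 v : layer_sum (fun _ => 0) v = 0.
Proof. by elim: v => [|a [|b v] IH] //; rewrite layer_sum_cons2 IH mul0r addr0. Qed.

(* [L] is the last point of the grid. *)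
Lemma layer_sum_le_point v :
  sorted >%R v -> exists L : R, {in v, forall a, layer_sum (fun t => ind (t <= a)) v = a - L}.
Proof.
elim: v => [|a [|b r] IH] sv; first by exists 0.
  by exists a => x; rewrite inE => /eqP ->; rewrite subrr.
have [L HL] := IH (sorted_gt_behead sv).
have lt_a := sorted_gt_head sv.
exists L => x; rewrite inE => /orP[/eqP ->|xv]; last first.
  by rewrite layer_sum_cons2 HL // leNgt lt_a // mul0r add0r.
have below_b t : t \in b :: r -> t <= b.
  rewrite inE => /orP[/eqP ->//|tr].
  by rewrite ltW // (sorted_gt_head (sorted_gt_behead sv)).
rewrite layer_sum_cons2 lexx mul1r (eq_layer_sum (g := fun t => ind (t <= b))).
  by rewrite HL ?mem_head //; ring.
by move=> t tv; rewrite below_b // ltW // lt_a.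
Qed.

Lemma layer_sum_gap v a b : sorted >%R v -> a \in v -> b \in v ->
  layer_sum (fun t => ind ((t <= a) && (b < t))) v = Num.max (a - b) 0.
Proof.
move=> sv av bv; have [L HL] := layer_sum_le_point sv.
case: (leP b a) => ba.
  rewrite (eq_layer_sum (g := fun t => ind (t <= a) - ind (t <= b))); last first.
    move=> t _; case: (leP t b) => tb /=; first by rewrite (le_trans tb ba) subrr.
    by rewrite subr0 andbT.
  by rewrite layer_sumB !HL // (max_idPl _) ?subr_ge0 //; ring.
rewrite (max_idPr _) ?subr_le0 ?ltW // -(layer_sum0 v); apply: eq_layer_sum => t _.
by case: (leP t a) => ta //=; rewrite ltNge (ltW (le_lt_trans ta ba)).
Qed.

Lemma sorted_grid_exists (l : seq R) :
  exists v, sorted >%R v /\ v =i l.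
Proof.
exists (rev (sort <=%O (undup l))); split; last first.
  by move=> t; rewrite mem_rev mem_sort mem_undup.
rewrite rev_sorted lt_sorted_uniq_le sort_uniq undup_uniq.
exact/sort_sorted/le_total.
Qed.

End LayerSum.

Arguments ind {R}.

Section Indicator.
Variable R : realDomainType.

Definition indicator (I : finType) (S : {set I}) (i : I) : R := ind (i \in S).

Lemma indicator_level (I : finType) (S : {set I}) t :
  0 < t -> t <= 1 -> [set i | t <= indicator S i] = S.
Proof.
move=> t_gt0 t_le1; apply/setP => i; rewrite inE /indicator.
by case: (i \in S); rewrite ?t_le1 // leNgt t_gt0.
Qed.

End Indicator.

Arguments indicator {R I}.

Lemma telescope_sum (R : zmodType) (u : nat -> R) m :
  \sum_(j < m) (u j - u j.+1) = u 0%N - u m.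
Proof. by elim: m => [|m IH]; rewrite ?big_ord0 ?subrr // big_ord_recr /= IH addrA subrK. Qed.

Lemma sum_level_crossings (R : realDomainType) (a : seq R) t m :
  {in [pred q | (q < m)%N], forall q p, (p <= q)%N -> a`_q <= a`_p} ->
  (0 < m)%N -> t <= a`_0 -> a`_m.-1 < t ->
  \sum_(j < m) ind [&& (j.+1 < m)%N, t <= a`_j & a`_j.+1 < t] = 1 :> R.
Proof.
case: m => [//|m] mono _ t_le_a0 am_lt_t /=.
rewrite big_ord_recr /= ltnn /= addr0.
transitivity (\sum_(j < m) (ind (t <= a`_j) - ind (t <= a`_j.+1)) : R).
  apply: eq_bigr => j _; have jm : (j.+1 < m.+1)%N by rewrite ltnS.
  rewrite jm /=; case: (leP t a`_j.+1) => [t_le|]; last by rewrite andbT subr0.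
  by rewrite (le_trans t_le (mono _ jm _ (leqnSn _))) subrr.
by rewrite (telescope_sum (fun j => ind (t <= a`_j))) t_le_a0 leNgt am_lt_t subr0.
Qed.

Section LovaszExtension.
Variables (R : realType) (n : nat) (x : 'I_n -> R).

Let s := sort (fun i j => x j <= x i) (enum 'I_n).
Let a := map x s.

Let size_s : size s = n.
Proof. by rewrite size_sort size_enum_ord. Qed.

Let mem_s i : i \in s.
Proof. by rewrite mem_sort mem_enum. Qed.

Let index_s_lt i : (index i s < n)%N.
Proof. by rewrite -{2}size_s index_mem. Qed.

Let x_index i : x i = a`_(index i s).
Proof. by rewrite (nth_map i) ?nth_index // index_mem. Qed.

Let a_nonincr : {in [pred q | (q < n)%N], forall q p, (p <= q)%N -> a`_q <= a`_p}.
Proof.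
move=> q qn p pq; have sorted_a : sorted >=%R a.
  by rewrite sorted_map; apply: sort_sorted => i j; exact: le_total.
apply: (sorted_leq_nth ge_trans lexx 0 sorted_a) => //;
  by rewrite inE size_map size_s // (leq_ltn_trans pq).
Qed.

Let take_s_level j t : (j.+1 < n)%N -> t <= a`_j -> a`_j.+1 < t ->
  [set i in take j.+1 s] = [set i | t <= x i].
Proof.
move=> jn t_le a_lt; apply/setP => i; rewrite !inE in_take ?mem_s // x_index.
apply/idP/idP => [i_le|t_le_i]; first exact: le_trans t_le (a_nonincr (ltnW jn) i_le).
rewrite ltnS leqNgt; apply/negP => j_lt.
by have := le_lt_trans (le_trans t_le_i (a_nonincr (index_s_lt i) j_lt)) a_lt; rewrite ltxx.
Qed.

Let set_s : [set i in s] = setT.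
Proof. by apply/setP => i; rewrite !inE mem_s. Qed.

Let crossing j t : R := ind [&& (j.+1 < n)%N, t <= a`_j & a`_j.+1 < t].

Let gap_layer_sum j v : (j.+1 < n)%N -> sorted >%R v -> (forall i, x i \in v) ->
  a`_j - a`_j.+1 = layer_sum (crossing j) v.
Proof.
move=> jn sv xv; have a_in_v k : (k < n)%N -> a`_k \in v.
  by move=> kn; have /mapP[i _ ->] : a`_k \in a by rewrite mem_nth // size_map size_s.
rewrite /crossing jn layer_sum_gap ?a_in_v ?(ltnW jn) //.
by rewrite (max_idPl _) // subr_ge0 a_nonincr.
Qed.

Let sum_crossing t : (exists i, x i < t) -> (exists i, t <= x i) ->
  \sum_(j < n) crossing j t = 1.
Proof.
move=> [i1 xi1_lt] [i2 le_xi2].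
have n_gt0 : (0 < n)%N := leq_ltn_trans (leq0n i1) (ltn_ord i1).
apply: (sum_level_crossings a_nonincr n_gt0).
  by rewrite (le_trans le_xi2) // x_index (a_nonincr (index_s_lt i2)).
rewrite (le_lt_trans _ xi1_lt) // x_index a_nonincr //.
  by rewrite inE prednK.
by rewrite -ltnS prednK ?index_s_lt.
Qed.

Let sum_take_crossing (F : {set 'I_n} -> R) t : F set0 = 0 -> F setT = 0 ->
  \sum_(j < n) F [set i in take j.+1 s] * crossing j t = F [set i | t <= x i].
Proof.
move=> F0 FT; transitivity (\sum_(j < n) F [set i | t <= x i] * crossing j t).
  apply: eq_bigr => j _; rewrite /crossing.
  case: and3P => [[jn t_le lt_t]|_]; last by rewrite !mulr0.
  by rewrite (take_s_level jn t_le lt_t).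
rewrite -mulr_sumr; have [all_ge|/forallPn[i1]] := boolP [forall i, t <= x i].
  rewrite (_ : [set i | t <= x i] = setT) ?FT ?mul0r //.
  by apply/setP => i; rewrite !inE (forallP all_ge).
rewrite -ltNge => xi1_lt; have [all_lt|/forallPn[i2]] := boolP [forall i, x i < t].
  rewrite (_ : [set i | t <= x i] = set0) ?F0 ?mul0r //.
  by apply/setP => i; rewrite !inE leNgt (forallP all_lt).
rewrite -leNgt => le_xi2.
by rewrite sum_crossing ?mulr1 //; [exists i1 | exists i2].
Qed.

Lemma lovasz_layer_sum (F : {set 'I_n} -> R) v :
  F set0 = 0 -> F setT = 0 -> sorted >%R v -> (forall i, x i \in v) ->
  lovasz F x = layer_sum (fun t => F [set i | t <= x i]) v.
Proof.
move=> F0 FT sv xv; rewrite /lovasz -/s -/a.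
transitivity (\sum_(j < n) layer_sum (fun t => F [set i in take j.+1 s] * crossing j t) v).
  apply: eq_bigr => j _; rewrite layer_sumZ; case: (ltnP j.+1 n) => jn.
    by rewrite -gap_layer_sum.
  by rewrite take_oversize ?size_s // set_s FT !mul0r.
by rewrite -layer_sum_sum; apply: eq_layer_sum => t _; apply: sum_take_crossing.
Qed.

End LovaszExtension.

Section DirectedCut.
Variables (R : realType) (T : finType) (A : T -> T -> R).

Lemma cutG_ind X :
  cutG A X = \sum_u \sum_v A u v * ind ((u \in X) && (v \notin X)).
Proof.
rewrite /cutG big_mkcond; apply: eq_bigr => u _; case: (u \in X) => /=.
  rewrite big_mkcond; apply: eq_bigr => v _.
  by rewrite inE; case: (v \in X); rewrite ?mulr0 ?mulr1.
by rewrite big1 // => v _; rewrite mulr0.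
Qed.

Lemma cutG_setT : cutG A setT = 0.
Proof. by rewrite /cutG setCT big1 // => u _; rewrite big_set0. Qed.

Lemma Q1g_layer_sum y v : sorted >%R v -> (forall u, y u \in v) ->
  Q1g A y = layer_sum (fun t => cutG A [set u | t <= y u]) v.
Proof.
move=> sv yv; under eq_layer_sum => t _ do rewrite cutG_ind.
rewrite layer_sum_sum /Q1g; apply: eq_bigr => u _; rewrite layer_sum_sum.
apply: eq_bigr => v' _; rewrite -(layer_sum_gap sv (yv u) (yv v')) -layer_sumZ.
by apply: eq_layer_sum => t _; rewrite !inE -ltNge.
Qed.

Hypothesis A_ge0 : forall u v, 0 <= A u v.

Lemma cutG_ge0 X : 0 <= cutG A X.
Proof. by apply: sumr_ge0 => u _; apply: sumr_ge0. Qed.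

Lemma cutG_submod X Y : cutG A (X :&: Y) + cutG A (X :|: Y) <= cutG A X + cutG A Y.
Proof.
rewrite !cutG_ind -!big_split; apply: ler_sum => u _.
rewrite -!big_split; apply: ler_sum => v _ /=; rewrite -!mulrDr ler_wpM2l // !inE.
by case: (u \in X); case: (u \in Y); case: (v \in X); case: (v \in Y);
  rewrite /ind /= ?mulr1n ?mulr0n; lra.
Qed.

End DirectedCut.

Section JoinedVertexSet.
Variables (N M : nat).
Local Notation V := ('I_N + 'I_M)%type.

Lemma mem_join_inl (S : {set 'I_N}) (T : {set 'I_M}) i :
  (inl i \in join_set S T) = (i \in S).
Proof.
rewrite /join_set inE mem_imset; last by move=> ? ? [].
by case: imsetP => [[? _ //]|_]; rewrite orbF.
Qed.

Lemma mem_join_inr (S : {set 'I_N}) (T : {set 'I_M}) j :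
  (inr j \in join_set S T) = (j \in T).
Proof.
rewrite /join_set inE [inr j \in _ @: T]mem_imset; last by move=> ? ? [].
by case: imsetP => [[? _ //]|_].
Qed.

Lemma join_setP (X : {set V}) (S : {set 'I_N}) (T : {set 'I_M}) :
  (forall i, (inl i \in X) = (i \in S)) -> (forall j, (inr j \in X) = (j \in T)) ->
  X = join_set S T.
Proof. by move=> XS XT; apply/setP => -[i|j]; rewrite ?mem_join_inl ?mem_join_inr. Qed.

Lemma join_setI (S S' : {set 'I_N}) (T T' : {set 'I_M}) :
  join_set S T :&: join_set S' T' = join_set (S :&: S') (T :&: T').
Proof. by apply: join_setP => ?; rewrite !in_setI ?mem_join_inl ?mem_join_inr. Qed.

Lemma join_setU (S S' : {set 'I_N}) (T T' : {set 'I_M}) :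
  join_set S T :|: join_set S' T' = join_set (S :|: S') (T :|: T').
Proof. by apply: join_setP => ?; rewrite in_setU ?mem_join_inl ?mem_join_inr in_setU. Qed.

Lemma join_setTT : join_set [set: 'I_N] [set: 'I_M] = setT.
Proof. by apply/esym/join_setP => ?; rewrite !inE. Qed.

Lemma join_vec_level (R : realType) (x : 'I_N -> R) (xb : 'I_M -> R) t :
  [set u | t <= join_vec x xb u] = join_set [set i | t <= x i] [set j | t <= xb j].
Proof. by apply: join_setP => ?; rewrite !inE. Qed.

End JoinedVertexSet.

Section MaximalMinimizer.
Variables (R : realType) (N M : nat).
Variables (F : {set 'I_N} -> R) (G : {set ('I_N + 'I_M)%type} -> R).
Hypothesis G_submod : forall X Y, G (X :&: Y) + G (X :|: Y) <= G X + G Y.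
Hypothesis F_le_G : forall S T, F S <= G (join_set S T).
Hypothesis F_attained : forall S, exists T, G (join_set S T) = F S.

Definition minimizer (S : {set 'I_N}) (T : {set 'I_M}) := G (join_set S T) == F S.

Definition max_minimizer (S : {set 'I_N}) := \bigcup_(T | minimizer S T) T.

(* By submodularity, [G] at the intersection and the union of the two joined sets
   sum to at most [F S + F S'], while each is bounded below by [F S], resp. [F S']. *)
Lemma minimizerU (S S' : {set 'I_N}) (T T' : {set 'I_M}) : S \subset S' ->
  minimizer S T -> minimizer S' T' -> minimizer S' (T :|: T').
Proof.
move=> sSS' /eqP minT /eqP minT'.
have := G_submod (join_set S T) (join_set S' T').
rewrite join_setI join_setU minT minT' (setIidPl sSS') (setUidPr sSS').
have := F_le_G S (T :&: T'); have := F_le_G S' (T :|: T') => h1 h2 h3.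
by apply/eqP/le_anti; rewrite h1 andbT; lra.
Qed.

Lemma max_minimizerP S : minimizer S (max_minimizer S).
Proof.
have [T0 /eqP minT0] := F_attained S.
suff : minimizer S (T0 :|: max_minimizer S) by rewrite (setUidPr _) // bigcup_sup.
apply: (big_ind (fun X => minimizer S (T0 :|: X))); first by rewrite setU0.
  by move=> X Y minX minY; have := minimizerU (subxx S) minX minY; rewrite setUACA setUid.
by move=> T minT; apply: minimizerU (subxx S) minT0 minT.
Qed.

Lemma max_minimizer_mono : {homo max_minimizer : S S' / S \subset S'}.
Proof.
move=> S S' sSS'; apply: subset_trans (subsetUl _ (max_minimizer S')) _.
exact: bigcup_sup _ (minimizerU sSS' (max_minimizerP S) (max_minimizerP S')).
Qed.

End MaximalMinimizer.

Section LevelLift.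
Variables (R : realType) (N M : nat).
Variables (x : 'I_N -> R) (Tm : {set 'I_N} -> {set 'I_M}) (m : R).

Definition level_lift (j : 'I_M) : R :=
  \big[Num.max/m]_(i | j \in Tm [set k | x i <= x k]) x i.

Lemma level_lift_values j : level_lift j = m \/ exists i, level_lift j = x i.
Proof.
apply: (big_ind (fun z => z = m \/ exists i, z = x i)); [by left| |by right; exists i].
by move=> a b a_val b_val; case: (leP a b) => _; [exact: b_val | exact: a_val].
Qed.

Hypothesis Tm_mono : {homo Tm : S S' / S \subset S'}.
Hypothesis m_lt_x : forall i, m < x i.

Lemma level_lift_ge j : m <= level_lift j.
Proof.
apply: (big_ind (fun z => m <= z)) => // [a b ma mb|i _]; first by rewrite le_max ma.
exact: ltW.
Qed.

Lemma level_lift_level i :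
  [set j | x i <= level_lift j] = Tm [set k | x i <= x k].
Proof.
apply/setP => j; rewrite inE; apply/idP/idP => [|j_in]; last exact: le_bigmax_cond.
apply: contraLR; rewrite -ltNge => j_notin; apply/bigmax_ltP; split => // i' j_in'.
rewrite ltNge; apply: contra j_notin => le_xi'; apply: subsetP j j_in'.
by apply/Tm_mono/subsetP => k; rewrite !inE; apply: le_trans.
Qed.

End LevelLift.

Section CutEquivalence.
Variables (R : realType) (N M : nat) (Ed : {set {set 'I_N}}).
Variables (w : {set 'I_N} -> {set 'I_N} -> R).
Variables (A : ('I_N + 'I_M)%type -> ('I_N + 'I_M)%type -> R).
Hypothesis w_split : forall e, e \in Ed -> splitting_fun e (w e).
Hypothesis A_ge0 : forall u v, 0 <= A u v.

Lemma cutH_set0 : cutH Ed w set0 = 0.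
Proof. by rewrite /cutH big1 // => e /w_split[w0 _ _ _]; rewrite set0I. Qed.

Lemma cutH_setT : cutH Ed w setT = 0.
Proof.
rewrite /cutH big1 // => e /w_split[w0 _ w_sym _].
by rewrite setTI w_sym // setDv.
Qed.

Lemma Q1_layer_sum x v : sorted >%R v -> (forall i, x i \in v) ->
  Q1 Ed w x = layer_sum (fun t => cutH Ed w [set i | t <= x i]) v.
Proof. exact: lovasz_layer_sum cutH_set0 cutH_setT. Qed.

Section FromCutMinimization.
Hypothesis cutH_le : forall S T, cutH Ed w S <= cutG A (join_set S T).
Hypothesis cutH_attained : forall S, exists T, cutG A (join_set S T) = cutH Ed w S.

Lemma Q1_le_Q1g x xb : Q1 Ed w x <= Q1g A (join_vec x xb).
Proof.
have [v [sv vE]] := sorted_grid_exists (codom (join_vec x xb)).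
have yv u : join_vec x xb u \in v by rewrite vE codom_f.
rewrite (Q1g_layer_sum A sv yv) (Q1_layer_sum sv (fun i => yv (inl i))).
by apply: ler_layer_sum sv _ => t; rewrite join_vec_level.
Qed.

(* [xb] has the maximal minimizers of the level sets of [x] as level sets; its
   values are those of [x] or the strict lower bound [m], and at level [m] both
   cuts are cuts of full sets, hence zero. *)
Lemma Q1g_attains_Q1 x : exists xb, Q1g A (join_vec x xb) = Q1 Ed w x.
Proof.
pose Tm := max_minimizer (cutH Ed w) (cutG A).
have Tm_mono : {homo Tm : S S' / S \subset S'}.
  exact: max_minimizer_mono (cutG_submod A_ge0) cutH_le cutH_attained.
pose m := \big[Num.min/0]_i x i - 1.
have m_lt_x i : m < x i by rewrite ltrBlDr (le_lt_trans (bigmin_le _ i x)) ?ltrDl.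
pose xb := level_lift x Tm m; exists xb.
have [v [sv vE]] := sorted_grid_exists (codom (join_vec x xb)).
have yv u : join_vec x xb u \in v by rewrite vE codom_f.
rewrite (Q1g_layer_sum A sv yv) (Q1_layer_sum sv (fun i => yv (inl i))).
apply: eq_layer_sum => t; rewrite vE => /codomP[u ->]; rewrite join_vec_level.
have [[i ->]|->] : (exists i, join_vec x xb u = x i) \/ join_vec x xb u = m.
- by case: u => [i|j] /=; [left; exists i | case: (level_lift_values x Tm m j); auto].
- rewrite /xb level_lift_level //.
  exact/eqP/(max_minimizerP (cutG_submod A_ge0) cutH_le cutH_attained).
have all_ge (I : finType) (z : I -> R) : (forall i, m <= z i) -> [set i | m <= z i] = setT.
  by move=> m_le; apply/setP => i; rewrite !inE m_le.
rewrite !all_ge ?join_setTT ?cutG_setT ?cutH_setT // => [j|i].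
  exact: level_lift_ge.
exact: ltW.
Qed.

End FromCutMinimization.

Let grid01 : sorted >%R [:: 1; 0 : R].
Proof. by rewrite /= ltr01. Qed.

Let indicator_in01 (I : finType) (S : {set I}) i : indicator S i \in [:: 1; 0 : R].
Proof. by rewrite /indicator; case: (i \in S); rewrite !inE eqxx ?orbT. Qed.

Lemma Q1_indicator S : Q1 Ed w (indicator S) = cutH Ed w S.
Proof.
rewrite (Q1_layer_sum grid01 (indicator_in01 S)) layer_sum_cons2 /=.
by rewrite indicator_level ?ltr01 // subr0 mulr1 addr0.
Qed.

Lemma Q1g_indicator S T :
  Q1g A (join_vec (indicator S) (indicator T)) = cutG A (join_set S T).
Proof.
rewrite (Q1g_layer_sum A grid01); last by case=> ? /=; apply: indicator_in01.
rewrite layer_sum_cons2 /= join_vec_level !indicator_level ?ltr01 //.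
by rewrite subr0 mulr1 addr0.
Qed.

Lemma Q1g_indicator_ge S xb c : (forall T, c <= cutG A (join_set S T)) ->
  c <= Q1g A (join_vec (indicator S) xb).
Proof.
move=> c_le; set y := join_vec (indicator S) xb.
have [v [sv vE]] := sorted_grid_exists (1 :: 0 :: codom y).
have yv u : y u \in v by rewrite vE !inE codom_f !orbT.
have -> : c = layer_sum (fun t => c * ind ((t <= 1) && (0 < t))) v.
  rewrite layer_sumZ layer_sum_gap ?vE ?mem_head ?inE ?eqxx ?orbT //.
  by rewrite subr0 (max_idPl ler01) mulr1.
rewrite (Q1g_layer_sum A sv yv); apply: ler_layer_sum sv _ => t.
case: (leP t 1) => t_le1; case: (ltP 0 t) => t_gt0; rewrite ?mulr0 ?cutG_ge0 //.
by rewrite mulr1 join_vec_level indicator_level.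
Qed.

Section FromLovaszMinimization.
Hypothesis Q1_min : forall x, is_min (fun xb => Q1g A (join_vec x xb)) (Q1 Ed w x).

Lemma cutH_is_min_cut S : is_min (fun T => cutG A (join_set S T)) (cutH Ed w S).
Proof.
have [[xb Q1g_xb] Q1_le] := Q1_min (indicator S).
rewrite Q1_indicator in Q1g_xb Q1_le.
have cutH_le T : cutH Ed w S <= cutG A (join_set S T) by rewrite -Q1g_indicator.
split=> //; pose T0 := [arg min_(T < set0) cutG A (join_set S T)]%O.
have T0_min T : cutG A (join_set S T0) <= cutG A (join_set S T).
  by rewrite /T0; case: arg_minP => // T1 _; apply.
exists T0; apply/le_anti; rewrite cutH_le andbT -Q1g_xb.
exact: Q1g_indicator_ge.
Qed.

End FromLovaszMinimization.

End CutEquivalence.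

Theorem theorem1 (R : realType) (N M : nat)
  (Ed : {set {set 'I_N}}) (mu : 'I_N -> R)
  (w : {set 'I_N} -> {set 'I_N} -> R)
  (A : ('I_N + 'I_M)%type -> ('I_N + 'I_M)%type -> R) :
  (forall i, 0 < mu i) ->
  (forall e, e \in Ed -> splitting_fun e (w e)) ->
  (forall u v, 0 <= A u v) ->
  (forall S : {set 'I_N},
     is_min (fun T : {set 'I_M} => cutG A (join_set S T)) (cutH Ed w S))
  <->
  (forall x : 'I_N -> R,
     is_min (fun xb : 'I_M -> R => Q1g A (join_vec x xb)) (Q1 Ed w x)).
Proof.
move=> _ w_split A_ge0; split => [cut_min x|]; last exact: cutH_is_min_cut.
have cutH_le S T : cutH Ed w S <= cutG A (join_set S T) by case: (cut_min S).
have cutH_attained S : exists T, cutG A (join_set S T) = cutH Ed w S.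
  by case: (cut_min S).
split; last exact: Q1_le_Q1g.
exact: Q1g_attains_Q1.
Qed.
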